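(* Fix $x\in\mathcal{X}$ and let $\rho=\operatorname{cor}\big(Y(0),Y(1)\mid X=x\big)\in[-1,1]$. Assume that $\big(Y(1),Y(0)\big)\mid X=x$ is (bivariate) Gaussian, that $\hat\mu_t(x)=\mu_t(x)$ for $t=0,1$, and that the nonnegative numbers $l_t(x),u_t(x)$ satisfy, for $t=0,1$, \[ \mathbb{P}\big(Y(t)\le \hat\mu_t(x)+u_t(x)\mid X=x\big)=0.95,\qquad \mathbb{P}\big(Y(t)\ge \hat\mu_t(x)-l_t(x)\mid X=x\big)=0.95 . \] Let $\hat\tau(x)=\hat\mu_1(x)-\hat\mu_0(x)$ and define the $CW(\rho)$ interval \[ C_{ITE}(x)=\Big[\hat\tau(x)-D_\rho\big(l_1(x),u_0(x)\big),\ \hat\tau(x)+D_\rho\big(l_0(x),u_1(x)\big)\Big]. \] Then $C_{ITE}$ is optimal in the sense that it is the smallest set satisfying \[ \mathbb{P}\big(Y(1)-Y(0)\in C_{ITE}(X)\mid X=x\big)=0.9 . \]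
   Context: Potential outcomes framework: $(Y(1),Y(0),T,X)$ is a random vector with covariates $X\in\mathcal{X}\subseteq\mathbb{R}^d$ and potential outcomes $Y(1),Y(0)\in\mathbb{R}$. Write $\mu_t(x)=\mathbb{E}[Y(t)\mid X=x]$, $t=0,1$; $\hat\mu_t$ denotes an estimate of $\mu_t$. For $\rho\in[-1,1]$ and $a,b\ge 0$, the correlation-adjusted Euclidean distance is $D_\rho(a,b)=\sqrt{a^2+b^2-2\rho ab}$. *)

From HB Require Import structures.
From mathcomp Require Import all_boot all_order all_algebra.
From mathcomp Require Import all_classical all_reals all_analysis.
Set Implicit Arguments. Unset Strict Implicit. Unset Printing Implicit Defensive.
Import Order.TTheory GRing.Theory Num.Theory.
Local Open Scope ring_scope.

Definition Drho {R : realType} (rho a b : R) : R :=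
  Num.sqrt (a ^+ 2 + b ^+ 2 - 2 * rho * a * b).

Definition bvn_pdf {R : realType} (m1 m0 s1 s0 r : R) (y : R * R) : R :=
  let z1 := (y.1 - m1) / s1 in
  let z0 := (y.2 - m0) / s0 in
  (2 * pi * s1 * s0 * Num.sqrt (1 - r ^+ 2))^-1 *
  expR (- (z1 ^+ 2 - 2 * r * z1 * z0 + z0 ^+ 2) / (2 * (1 - r ^+ 2))).

(** P (a probability on R x R, the law of (Y(1),Y(0))) is the bivariate Gaussian
    law with means m1, m0, standard deviations s1, s0 and correlation r. *)
Definition is_bvn {R : realType} (P : probability (R * R)%type R)
  (m1 m0 s1 s0 r : R) : Prop :=
  [/\ 0 < s1, 0 < s0, -1 < r < 1 &
    forall A : set (R * R)%type, measurable A ->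
      P A = (\int[(@lebesgue_measure R \x @lebesgue_measure R)%E]_(y in A)
                (bvn_pdf m1 m0 s1 s0 r y)%:E)%E].

From HB Require Import structures.
From mathcomp Require Import all_boot all_order all_algebra.
From mathcomp Require Import all_classical all_reals all_analysis.
From mathcomp Require Import ring lra measurable_realfun.
Import Order.TTheory GRing.Theory Num.Theory.
Local Open Scope classical_set_scope.
Local Open Scope ring_scope.

(* Shearing (t, b) |-> (t + c b, b), which has unit Jacobian, factors the
   bivariate normal density into an N(mu1 - c mu0, D_rho(s1, c s0)^2) density
   in t times a normal density in b; integrating b out (Tonelli) gives
   Y(1) - c Y(0) ~ N(mu1 - c mu0, D_rho(s1, c s0)^2).  For c = 0 (and for the
   swapped density) this yields the margins N(mu_t, s_t^2), so the four 95%
   conditions force l_t = u_t = z s_t with Phi(z) = 0.95.  For c = 1 it shows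
   that both endpoints of C lie z standard deviations D_rho(s1, s0) away from
   the mean tau of Y(1) - Y(0), whence the coverage 2 * 0.95 - 1 = 0.9.
   Optimality is the bathtub principle: C is a superlevel set of the density
   of Y(1) - Y(0), so a set of the same probability must replace the mass of
   C outside it, carried at density above the level, by mass carried at
   density below the level, which costs at least as much Lebesgue measure. *)

Section affine_change_of_variables.
Context {R : realType}.
Notation mu := (@lebesgue_measure R).
Implicit Types (m s : R) (A D : set R).

Lemma measurable_affine m s : measurable_fun setT (fun x : R => m + s * x).
Proof. by apply: measurable_funD => //; exact: measurable_funM. Qed.

Lemma lebesgue_measure_affine m s A : s != 0 -> measurable A ->
  mu A = (`|s|%:E * mu ((fun x => m + s * x)%R @^-1` A))%E.
Proof.
move=> s0 mA; apply: (@lebesgue_measure_unique R (mscale (NngNum (normr_ge0 s))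
  (pushforward mu ((fun x => m + s * x)%R : R -> measurableTypeR R)))) => //;
  first exact: measurable_affine.
move=> mf _ [[a b] _ <-].
change (mu `]a, b] = `|s|%:E * mu ((fun x => m + s * x)%R @^-1` `]a, b]))%E.
have [s_gt0|s_lt0] := ltrP 0%R s.
- have -> : (fun x => m + s * x)%R @^-1` `]a, b]%classic =
             `](a - m) / s, (b - m) / s]%classic.
    apply/seteqP; split => x /=; rewrite !in_itv /= ltr_pdivrMr // ler_pdivlMr //;
      by rewrite ltrBlDl lerBrDl mulrC.
  rewrite !lebesgue_measure_itv /= !lte_fin ltr_pM2r ?invr_gt0 // ltrD2r.
  case: ifPn => ab; last by rewrite mule0.
  by rewrite -!EFinD -EFinM gtr0_norm //; congr EFin; field; exact: lt0r_neq0.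
- have {s_lt0}s_lt0 : (s < 0)%R by rewrite lt_neqAle s0 s_lt0.
  have -> : (fun x => m + s * x)%R @^-1` `]a, b]%classic =
             `[(b - m) / s, (a - m) / s[%classic.
    apply/seteqP; split => x /=; rewrite !in_itv /= ler_ndivrMr // ltr_ndivlMr //;
      by rewrite ltrBlDl lerBrDl mulrC andbC.
  rewrite !lebesgue_measure_itv /= !lte_fin ltr_nM2r ?invr_lt0 // ltrD2r.
  case: ifPn => ab; last by rewrite mule0.
  by rewrite -!EFinD -EFinM ltr0_norm //; congr EFin; field; exact: ltr0_neq0.
Qed.

Local Open Scope ereal_scope.

Lemma ge0_integral_affine m s D (g : R -> \bar R) : s != 0%R ->
  measurable D -> measurable_fun D g -> (forall x, D x -> 0 <= g x) ->
  \int[mu]_(x in D) g x =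
  `|s|%:E * \int[mu]_(x in (fun x => m + s * x)%R @^-1` D) g (m + s * x)%R.
Proof.
move=> s0 mD mg g0.
rewrite (eq_measure_integral (mscale (NngNum (normr_ge0 s))
  (pushforward mu ((fun x => m + s * x)%R : R -> measurableTypeR R))))
  => [|mf|mf A mA _]; first exact: measurable_affine.
- rewrite ge0_integral_mscale //; congr (_ * _).
  by apply: ge0_integral_pushforward => // x; rewrite inE; exact: g0.
- exact: lebesgue_measure_affine.
Qed.

End affine_change_of_variables.

Section normal_affine.
Context {R : realType}.
Implicit Types (m s x k : R) (D : set R).

Lemma normal_peakE s : normal_peak s = (`|s| * Num.sqrt (pi *+ 2))^-1.
Proof. by rewrite /normal_peak -mulrnAr sqrtrM ?sqr_ge0 // sqrtr_sqr. Qed.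

Lemma normal_pdf_affine m s x : s != 0 ->
  `|s| * normal_pdf m s (m + s * x) = normal_pdf 0 1 x.
Proof.
move=> s0; rewrite !normal_pdfE ?oner_neq0 // !normal_peakE /normal_fun normr1 mul1r.
have s_gt0 : 0 < `|s| by rewrite normr_gt0.
rewrite mulrA invfM mulrA divff ?gt_eqF // mul1r; congr (_ * expR _).
by field.
Qed.

Lemma normal_pdfN m s : normal_pdf m (- s) = normal_pdf m s.
Proof.
apply/funext => x; have [->|s0] := eqVneq s 0; first by rewrite oppr0.
by rewrite !normal_pdfE ?oppr_eq0 // /normal_peak /normal_fun sqrrN.
Qed.

Lemma normal_probN m s : normal_prob m (- s) = normal_prob m s.
Proof. by rewrite /normal_prob normal_pdfN. Qed.

Local Open Scope ereal_scope.

Lemma normal_prob_affine m s D : s != 0%R -> measurable D ->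
  normal_prob m s D = normal_prob 0 1 ((fun x => m + s * x)%R @^-1` D).
Proof.
move=> s0 mD; have mpre := measurable_affine m s measurableT _ mD; rewrite setTI in mpre.
rewrite /normal_prob (ge0_integral_affine m s D _ s0) //; last 2 first.
- by apply/measurable_EFinP/measurable_funTS; exact: measurable_normal_pdf.
- by move=> x _; rewrite lee_fin normal_pdf_ge0.
rewrite -ge0_integralZl_EFin //; last 2 first.
- by move=> x _; rewrite lee_fin normal_pdf_ge0.
- apply/measurable_EFinP/measurableT_comp; first exact: measurable_normal_pdf.
  exact: measurable_funTS (measurable_affine m s).
by apply: eq_integral => x _; rewrite -EFinM normal_pdf_affine.
Qed.

Local Close Scope ereal_scope.

Lemma normal_prob_centered_itv m s k : 0 < s ->
  normal_prob m s `[m - k * s, m + k * s] = normal_prob 0 1 `[- k, k].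
Proof.
move=> s_gt0; rewrite normal_prob_affine ?gt_eqF //; congr normal_prob.
by apply/seteqP; split => x /=; rewrite !in_itv /= !lerD2l -mulNr [s * x]mulrC !ler_pM2r.
Qed.

End normal_affine.

Section standard_normal_cdf.
Context {R : realType}.
Notation mu := (@lebesgue_measure R).
Notation Phi x := (normal_prob (0 : R) 1 `]-oo, x]%classic).
Implicit Types (m s a b k : R).

Lemma normal_prob_le m s u : 0 < s ->
  normal_prob m s `]-oo, m + u] = Phi (u / s).
Proof.
move=> s0; rewrite normal_prob_affine ?gt_eqF //; congr normal_prob.
by apply/seteqP; split => x /=; rewrite !in_itv /= ler_pdivlMr // lerD2l mulrC.
Qed.

Lemma normal_prob_ge m s l : 0 < s ->
  normal_prob m s `[m - l, +oo[ = Phi (l / s).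
Proof.
move=> s0; rewrite -normal_probN normal_prob_affine ?oppr_eq0 ?gt_eqF //.
congr normal_prob; apply/seteqP; split => x /=;
  by rewrite !in_itv /= andbT ler_pdivlMr // lerD2l mulNr lerN2 mulrC.
Qed.

Local Open Scope ereal_scope.

Lemma std_normal_prob_itv_gt0 a b : (a < b)%R -> 0 < normal_prob 0 1 `]a, b].
Proof.
move=> ab; pose c := (normal_peak 1 * expR (- (a ^+ 2 + b ^+ 2) / 2))%R.
have c_gt0 : (0 < c)%R by rewrite mulr_gt0 ?expR_gt0 // normal_peak_gt0 ?oner_neq0.
apply: (@lt_le_trans _ _ (\int[mu]_(x in `]a, b]) (cst c%:E) x)).
  rewrite integral_cst //= lebesgue_measure_itv /= lte_fin ab -EFinD -EFinM lte_fin.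
  by rewrite mulr_gt0 // subr_gt0.
apply: ge0_le_integral => //.
- by move=> x _; rewrite lee_fin ltW.
- by apply/measurable_EFinP/measurable_funTS; exact: measurable_normal_pdf.
move=> x /=; rewrite in_itv /= => /andP[ax xb].
rewrite lee_fin normal_pdfE ?oner_neq0 // /normal_fun /c ler_wpM2l ?normal_peak_ge0 //.
rewrite ler_expR subr0 expr1n -mulr_natr mul1r.
suff : (x ^+ 2 <= a ^+ 2 + b ^+ 2)%R by lra.
by have [x0|x0] := leP 0%R x; nra.
Qed.

Lemma std_normal_cdf_lt {a b} : (a < b)%R -> Phi a < Phi b.
Proof.
move=> ab; have -> : `]-oo, b]%classic = `]-oo, a] `|` `]a, b].
  by rewrite -itv_bndbnd_setU // bnd_simp ltW.
rewrite measureU //; last first.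
  by rewrite -subset0 => x [] /=; rewrite !in_itv /= => xa /andP[ax _]; lra.
by rewrite lteDl ?fin_num_measure // std_normal_prob_itv_gt0.
Qed.

Lemma std_normal_cdf_inj {a b} : Phi a = Phi b -> a = b.
Proof.
move=> e; case: (ltgtP a b) => // [ab|ba].
- by have := std_normal_cdf_lt ab; rewrite e ltxx.
- by have := std_normal_cdf_lt ba; rewrite e ltxx.
Qed.

Local Close Scope ereal_scope.

Lemma std_normal_prob_symmetric_itv {k p} : 0 <= k -> Phi k = p%:E ->
  normal_prob 0 1 `[- k, k] = (p *+ 2 - 1)%:E.
Proof.
move=> k0 Phik.
have upper : normal_prob 0 1 `[- k, +oo[ = p%:E.
  by rewrite -[- k]sub0r normal_prob_ge // divr1.
have lower_split : `]-oo, k]%classic = `]-oo, - k[ `|` `[- k, k].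
  by rewrite -itv_bndbnd_setU // bnd_simp; lra.
have all_split : [set: R] = `]-oo, - k[ `|` `[- k, +oo[%classic.
  by rewrite -setCitvl setUCr.
have total : normal_prob 0 1 [set: R] = 1%E by rewrite probability_setT.
rewrite all_split measureU //= ?upper in total; last by rewrite -setCitvl setICr.
rewrite lower_split measureU //= in Phik; last first.
  by rewrite -subset0 => x [] /=; rewrite !in_itv /= => xk /andP[kx _]; lra.
have fin_left : normal_prob 0 1 `]-oo, - k[ \is a fin_num by rewrite fin_num_measure.
have fin_mid : normal_prob 0 1 `[- k, k] \is a fin_num by rewrite fin_num_measure.
move: total Phik; rewrite -(fineK fin_left) -(fineK fin_mid) -!EFinD => -[total] [Phik].
by congr EFin; lra.
Qed.
End standard_normal_cdf.

Section superlevel_set.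
Local Open Scope ereal_scope.
Context {d} {T : measurableType d} {R : realType}.
Context {mu nu : {measure set T -> \bar R}} {f : T -> R}.
Hypotheses (mf : measurable_fun setT f) (f_ge0 : forall x, (0 <= f x)%R).
Hypothesis nuE : forall A, measurable A -> nu A = \int[mu]_(x in A) (f x)%:E.

Lemma superlevel_set_min_measure (c : R) (C S : set T) : (0 < c)%R ->
  measurable C -> measurable S ->
  (forall x, C x -> c <= f x)%R -> (forall x, ~ C x -> f x <= c)%R ->
  nu C \is a fin_num -> nu S = nu C -> mu C <= mu S.
Proof.
move=> c_gt0 mC mS fC fCc nuC_fin nuSC.
have mCS : measurable (C `\` S) by exact: measurableD.
have mSC : measurable (S `\` C) by exact: measurableD.
have nu_diff : nu (S `\` C) = nu (C `\` S).
  move: nuSC; rewrite (measureDI nu mS mC) (measureDI nu mC mS) setIC.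
  have : nu (C `&` S) \is a fin_num.
    rewrite ge0_fin_numE //; apply: (@le_lt_trans _ _ (nu C)); last by rewrite -ge0_fin_numE.
    by apply: le_measure; rewrite ?inE //; exact: measurableI.
  by move=> fin /(congr1 (fun z => z - nu (C `&` S))); rewrite !addeK.
have lower : c%:E * mu (C `\` S) <= nu (C `\` S).
  rewrite nuE // -integral_cst //; apply: ge0_le_integral => //.
  - by move=> x _; rewrite lee_fin ltW.
  - exact/measurable_EFinP/measurable_funTS.
  - by move=> x [Cx _]; rewrite lee_fin fC.
have upper : nu (S `\` C) <= c%:E * mu (S `\` C).
  rewrite nuE // -integral_cst //; apply: ge0_le_integral => //.
  - by move=> x _; rewrite lee_fin.
  - exact/measurable_EFinP/measurable_funTS.
  - by move=> x [_ Cx]; rewrite lee_fin fCc.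
have : mu (C `\` S) <= mu (S `\` C).
  by rewrite -(@lee_pmul2l _ c%:E) ?lte_fin // (le_trans lower) // -nu_diff.
rewrite (measureDI mu mC mS) (measureDI mu mS mC) (setIC S C) => ?.
exact: leeD.
Qed.

End superlevel_set.

Section normal_min_measure.
Context {R : realType}.
Notation mu := (@lebesgue_measure R).
Implicit Types (m s e x y : R) (S : set R).

Lemma normal_pdf_gt0 m s x : s != 0 -> 0 < normal_pdf m s x.
Proof. by move=> s0; rewrite normal_pdfE // mulr_gt0 ?expR_gt0 ?normal_peak_gt0. Qed.

Lemma normal_pdf_le m s x y : s != 0 -> (y - m) ^+ 2 <= (x - m) ^+ 2 ->
  normal_pdf m s x <= normal_pdf m s y.
Proof.
move=> s0 xy; rewrite !normal_pdfE // ler_wpM2l ?normal_peak_ge0 // ler_expR.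
by rewrite !mulNr lerN2 ler_pM2r // invr_gt0 pmulrn_lgt0 // exprn_even_gt0.
Qed.

Lemma normal_prob_itv_min_measure {m s e S} : 0 < s -> measurable S ->
  normal_prob m s S = normal_prob m s `[m - e, m + e] ->
  (mu `[(m - e)%R, (m + e)%R] <= mu S)%E.
Proof.
move=> s_gt0 mS PS; have s0 : s != 0 by rewrite gt_eqF.
have [e_lt0|e_ge0] := ltP e 0.
  by rewrite set_itv_ge ?measure0 ?measure_ge0 // bnd_simp -ltNge; lra.
apply: (superlevel_set_min_measure (nu := normal_prob m s) (measurable_normal_pdf m s)
  (normal_pdf_ge0 m s) _ (normal_pdf m s (m + e))) => //.
- exact: normal_pdf_gt0.
- move=> x /=; rewrite in_itv /= => /andP[lex lxe].
  by apply: normal_pdf_le => //; rewrite addrAC subrr add0r; nra.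
- move=> x /=; rewrite in_itv /= => /negP; rewrite negb_and -!ltNge => xC.
  by apply: normal_pdf_le => //; rewrite addrAC subrr add0r; case/orP: xC => ?; nra.
- by rewrite fin_num_measure.
Qed.

End normal_min_measure.

Section correlated_distance.
Context {R : realType}.
Implicit Types (r a b k : R).

Lemma Drho_radicand_gt0 r a b : 0 < a -> -1 < r < 1 ->
  0 < a ^+ 2 + b ^+ 2 - 2 * r * a * b.
Proof.
move=> a_gt0 /andP[r_gt r_lt].
have -> : a ^+ 2 + b ^+ 2 - 2 * r * a * b = (b - r * a) ^+ 2 + a ^+ 2 * (1 - r ^+ 2) by ring.
by rewrite ltr_wpDl ?sqr_ge0 // mulr_gt0 ?exprn_gt0 //; nra.
Qed.

Lemma Drho_gt0 r a b : 0 < a -> -1 < r < 1 -> 0 < Drho r a b.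
Proof. by move=> a_gt0 r1; rewrite sqrtr_gt0 Drho_radicand_gt0. Qed.

Lemma sqr_Drho r a b : 0 < a -> -1 < r < 1 ->
  Drho r a b ^+ 2 = a ^+ 2 + b ^+ 2 - 2 * r * a * b.
Proof. by move=> a_gt0 r1; rewrite sqr_sqrtr // ltW // Drho_radicand_gt0. Qed.

Lemma DrhoC r a b : Drho r a b = Drho r b a.
Proof. by rewrite /Drho; congr Num.sqrt; ring. Qed.

Lemma DrhoZ r k a b : 0 <= k -> Drho r (k * a) (k * b) = k * Drho r a b.
Proof.
move=> k_ge0; rewrite /Drho.
have -> : (k * a) ^+ 2 + (k * b) ^+ 2 - 2 * r * (k * a) * (k * b) =
  k ^+ 2 * (a ^+ 2 + b ^+ 2 - 2 * r * a * b) by ring.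
by rewrite sqrtrM ?sqr_ge0 // sqrtr_sqr ger0_norm.
Qed.

Lemma Drhoa0 r a : Drho r a 0 = `|a|.
Proof. by rewrite /Drho expr0n /= addr0 !mulr0 subr0 sqrtr_sqr. Qed.

End correlated_distance.

Section bivariate_normal_density.
Context {R : realType}.

Lemma bvn_pdf_ge0 (m1 m0 s1 s0 r : R) (y : R * R) : 0 < s1 -> 0 < s0 ->
  0 <= bvn_pdf m1 m0 s1 s0 r y.
Proof.
move=> s1_gt0 s0_gt0; rewrite /bvn_pdf mulr_ge0 ?expR_ge0 //.
by rewrite invr_ge0 !mulr_ge0 ?sqrtr_ge0 ?pi_ge0 ?ltW.
Qed.

Lemma bvn_pdf_swap (m1 m0 s1 s0 r a b : R) :
  bvn_pdf m1 m0 s1 s0 r (a, b) = bvn_pdf m0 m1 s0 s1 r (b, a).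
Proof. by rewrite /bvn_pdf /=; congr (_^-1 * expR (- _ / _)); ring. Qed.

Lemma measurable_bvn_pdf d (T : measurableType d) (f g : T -> R)
    (m1 m0 s1 s0 r : R) :
  measurable_fun setT f -> measurable_fun setT g ->
  measurable_fun setT (fun z => bvn_pdf m1 m0 s1 s0 r (f z, g z)).
Proof.
move=> mf mg; rewrite /bvn_pdf /=; apply: measurable_funM => //.
apply: measurableT_comp; first exact: measurable_expR.
repeat (apply: measurable_funM || apply: measurable_funB || apply: measurable_funD ||
        apply: measurable_funX || apply: measurable_funN || exact: measurable_cst ||
        assumption).
Qed.

(* The second factor is the conditional density of Y(0) given Y(1) - c Y(0) = t. *)
Lemma bvn_pdf_shear (m1 m0 s1 s0 r c t b : R) : 0 < s1 -> 0 < s0 -> -1 < r < 1 ->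
  let sd := Drho r s1 (c * s0) in
  bvn_pdf m1 m0 s1 s0 r (t + c * b, b) =
  normal_pdf (m1 - c * m0) sd t *
  normal_pdf (m0 + (r * s1 * s0 - c * s0 ^+ 2) / sd ^+ 2 * (t - (m1 - c * m0)))
    (s1 * s0 * Num.sqrt (1 - r ^+ 2) / sd) b.
Proof.
move=> s1_gt0 s0_gt0 r1 sd.
have sd_gt0 : 0 < sd by exact: Drho_gt0.
have r2_gt0 : 0 < 1 - r ^+ 2 by case/andP: r1 => ? ?; nra.
have w_gt0 : 0 < s1 * s0 * Num.sqrt (1 - r ^+ 2) / sd.
  by apply: divr_gt0 => //; rewrite !pmulr_rgt0 ?sqrtr_gt0.
rewrite !normal_pdfE ?gt_eqF // !normal_peakE /normal_fun !gtr0_norm //.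
rewrite /bvn_pdf -[(t + c * b, b).1]/(t + c * b) -[(t + c * b, b).2]/b.
rewrite [RHS]mulrACA -invfM -expRD; congr (_^-1 * expR _).
  have pi2_ge0 : 0 <= pi *+ 2 :> R by rewrite mulrn_wge0 // pi_ge0.
  rewrite [RHS]mulrACA -expr2 sqr_sqrtr // -mulr_natr.
  by field; rewrite gt_eqF.
rewrite [(_ / sd) ^+ 2]expr_div_n !exprMn [Num.sqrt (1 - _) ^+ 2]sqr_sqrtr ?ltW //.
rewrite /sd sqr_Drho //.
have := Drho_radicand_gt0 r s1 (c * s0) s1_gt0 r1.
by move=> /gt_eqF radicand_neq0; field; rewrite radicand_neq0 !gt_eqF.
Qed.

End bivariate_normal_density.

Section bivariate_normal_laws.
Context {R : realType}.
Notation mu := (@lebesgue_measure R).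
Local Open Scope ereal_scope.

Lemma ge0_integral_shift (h : R) (g : R -> \bar R) :
  measurable_fun setT g -> (forall x, 0 <= g x) ->
  \int[mu]_x g x = \int[mu]_x g (h + x)%R.
Proof.
move=> mg g_ge0; rewrite (ge0_integral_affine h 1 setT g (oner_neq0 R)) //.
by rewrite normr1 mul1e preimage_setT; under eq_integral do rewrite mul1r.
Qed.

Lemma bvn_iterated_integral_lincomb {m1 m0 s1 s0 r c : R} {S : set R} :
  (0 < s1)%R -> (0 < s0)%R -> (-1 < r < 1)%R -> measurable S ->
  \int[mu]_b \int[mu]_a (\1_S (a - c * b) * bvn_pdf m1 m0 s1 s0 r (a, b))%:E
  = normal_prob (m1 - c * m0) (Drho r s1 (c * s0)) S.
Proof.
move=> s1_gt0 s0_gt0 r1 mS.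
pose F z := (\1_S z.1 * bvn_pdf m1 m0 s1 s0 r (z.1 + c * z.2, z.2))%:E.
have mF : measurable_fun setT F.
  apply/measurable_EFinP/measurable_funM.
    by apply: measurableT_comp; [exact: measurable_indic | exact: measurable_fst].
  apply: measurable_bvn_pdf; last exact: measurable_snd.
  by apply: measurable_funD; [exact: measurable_fst | apply: measurable_funM].
have F_ge0 z : 0 <= F z by rewrite lee_fin mulr_ge0 ?bvn_pdf_ge0.
transitivity (\int[mu]_b \int[mu]_t F (t, b)).
  apply: eq_integral => b _; rewrite (ge0_integral_shift (c * b)).
  - by apply: eq_integral => t _; rewrite /F /= (addrC (c * b)%R t) addrK.
  - apply/measurable_EFinP/measurable_funM.
      by apply: measurableT_comp; [exact: measurable_indic | exact: measurable_funB].
    exact: measurable_bvn_pdf.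
  - by move=> a; rewrite lee_fin mulr_ge0 ?bvn_pdf_ge0.
rewrite -(@fubini_tonelli _ _ (measurableTypeR R) (measurableTypeR R) R mu mu F mF F_ge0).
rewrite /normal_prob [RHS]integral_mkcond.
apply: eq_integral => t _.
under eq_integral do rewrite /F /= bvn_pdf_shear // mulrA EFinM.
rewrite ge0_integralZl_EFin //; last 3 first.
- by move=> b _; rewrite lee_fin normal_pdf_ge0.
- by apply/measurable_EFinP; exact: measurable_normal_pdf.
- by rewrite mulr_ge0 ?normal_pdf_ge0.
by rewrite integral_normal_pdf mule1 /patch indicE; case: ifPn; rewrite ?mul1r ?mul0r.
Qed.

Lemma is_bvn_preimage {P : probability (R * R)%type R} {m1 m0 s1 s0 r : R}
    {phi : R * R -> R} {S : set R} :
  is_bvn P m1 m0 s1 s0 r -> measurable_fun setT phi -> measurable S ->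
  P (phi @^-1` S) = \int[mu \x mu]_z (\1_S (phi z) * bvn_pdf m1 m0 s1 s0 r z)%:E.
Proof.
move=> [_ _ _ PE] mphi mS; have mpre := mphi measurableT S mS; rewrite setTI in mpre.
rewrite PE // integral_mkcond; apply: eq_integral => z _.
rewrite /patch indicE -[z \in _](_ : phi z \in S = _) //.
by case: ifPn; rewrite ?mul1r ?mul0r.
Qed.

Lemma is_bvn_lincomb {P : probability (R * R)%type R} {m1 m0 s1 s0 r : R} (c : R)
    {S : set R} :
  is_bvn P m1 m0 s1 s0 r -> measurable S ->
  P ((fun y => y.1 - c * y.2)%R @^-1` S) =
  normal_prob (m1 - c * m0) (Drho r s1 (c * s0)) S.
Proof.
move=> bvnP mS; have [s1_gt0 s0_gt0 r1 _] := bvnP.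
have mphi : measurable_fun setT (fun y : R * R => y.1 - c * y.2)%R.
  by apply: measurable_funB; [exact: measurable_fst | apply: measurable_funM].
rewrite (is_bvn_preimage bvnP mphi mS).
rewrite (@fubini_tonelli2 _ _ (measurableTypeR R) (measurableTypeR R) R mu mu); last 2 first.
- apply/measurable_EFinP/measurable_funM.
    exact: measurableT_comp.
  rewrite [X in measurable_fun _ X](_ : _ = fun z => bvn_pdf m1 m0 s1 s0 r (z.1, z.2)).
    by apply: measurable_bvn_pdf; [exact: measurable_fst | exact: measurable_snd].
  by apply/funext => -[].
- by move=> z; rewrite lee_fin mulr_ge0 ?bvn_pdf_ge0.
exact: bvn_iterated_integral_lincomb.
Qed.

Lemma is_bvn_fst {P : probability (R * R)%type R} {m1 m0 s1 s0 r : R} {S : set R} :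
  is_bvn P m1 m0 s1 s0 r -> measurable S -> P (fst @^-1` S) = normal_prob m1 s1 S.
Proof.
move=> bvnP mS; have [s1_gt0 _ _ _] := bvnP.
rewrite (_ : fst @^-1` S = (fun y => y.1 - 0 * y.2)%R @^-1` S); last first.
  by apply/seteqP; split => y /=; rewrite mul0r subr0.
by rewrite (is_bvn_lincomb _ bvnP mS) !mul0r subr0 Drhoa0 gtr0_norm.
Qed.

Lemma is_bvn_snd {P : probability (R * R)%type R} {m1 m0 s1 s0 r : R} {S : set R} :
  is_bvn P m1 m0 s1 s0 r -> measurable S -> P (snd @^-1` S) = normal_prob m0 s0 S.
Proof.
move=> bvnP mS; have [s1_gt0 s0_gt0 r1 _] := bvnP.
rewrite (is_bvn_preimage bvnP measurable_snd mS).
pose F z := (\1_S (z.2 - 0 * z.1) * bvn_pdf m0 m1 s0 s1 r (z.2, z.1))%:E.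
transitivity (\int[mu \x mu]_z F z).
  by apply: eq_integral => -[a b] _; rewrite /F /= bvn_pdf_swap mul0r subr0.
rewrite (@fubini_tonelli1 _ _ (measurableTypeR R) (measurableTypeR R) R mu mu); last 2 first.
- apply/measurable_EFinP/measurable_funM.
    apply: measurableT_comp => //.
    by apply: measurable_funB; [exact: measurable_snd | apply: measurable_funM].
  by apply: measurable_bvn_pdf; [exact: measurable_snd | exact: measurable_fst].
- by move=> z; rewrite lee_fin mulr_ge0 ?bvn_pdf_ge0.
by rewrite (bvn_iterated_integral_lincomb s0_gt0 s1_gt0 r1 mS) !mul0r subr0 Drhoa0 gtr0_norm.
Qed.

Lemma is_bvn_sub {P : probability (R * R)%type R} {m1 m0 s1 s0 r : R} {S : set R} :
  is_bvn P m1 m0 s1 s0 r -> measurable S ->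
  P [set y | (y.1 - y.2)%R \in S] = normal_prob (m1 - m0) (Drho r s1 s0) S.
Proof.
move=> bvnP mS; rewrite (_ : [set y | _] = (fun y => y.1 - 1 * y.2)%R @^-1` S).
  by rewrite (is_bvn_lincomb _ bvnP mS) !mul1r.
by apply/seteqP; split => y /=; rewrite mul1r inE.
Qed.

End bivariate_normal_laws.

Section quantiles.
Context {R : realType}.
Notation Phi x := (normal_prob (0 : R) 1 `]-oo, x]%classic).

Lemma is_bvn_equal_quantiles {P : probability (R * R)%type R}
    {m1 m0 s1 s0 r l1 u1 l0 u0 p : R} :
  is_bvn P m1 m0 s1 s0 r ->
  P [set y | y.1 <= m1 + u1] = p%:E -> P [set y | m1 - l1 <= y.1] = p%:E ->
  P [set y | y.2 <= m0 + u0] = p%:E -> P [set y | m0 - l0 <= y.2] = p%:E ->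
  exists2 z, Phi z = p%:E & [/\ l1 = z * s1, u1 = z * s1, l0 = z * s0 & u0 = z * s0].
Proof.
move=> bvnP Pu1 Pl1 Pu0 Pl0; have [s1_gt0 s0_gt0 _ _] := bvnP.
have Phi_u1 : Phi (u1 / s1) = p%:E.
  by rewrite -Pu1 -(normal_prob_le m1) // -(is_bvn_fst bvnP) // set_itvNyc.
have Phi_l1 : Phi (l1 / s1) = p%:E.
  by rewrite -Pl1 -(normal_prob_ge m1) // -(is_bvn_fst bvnP) // set_itvcy.
have Phi_u0 : Phi (u0 / s0) = p%:E.
  by rewrite -Pu0 -(normal_prob_le m0) // -(is_bvn_snd bvnP) // set_itvNyc.
have Phi_l0 : Phi (l0 / s0) = p%:E.
  by rewrite -Pl0 -(normal_prob_ge m0) // -(is_bvn_snd bvnP) // set_itvcy.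
have scaled (v s : R) : 0 < s -> Phi (v / s) = p%:E -> v = u1 / s1 * s.
  move=> s_gt0 Phiv; rewrite -(std_normal_cdf_inj (etrans Phiv (esym Phi_u1))).
  by rewrite divfK ?gt_eqF.
by exists (u1 / s1) => //; split; apply: scaled.
Qed.

End quantiles.

Theorem theorem1 (R : realType) (P : probability (R * R)%type R)
  (mu1 mu0 s1 s0 rho muhat1 muhat0 l1 u1 l0 u0 : R) :
  is_bvn P mu1 mu0 s1 s0 rho ->
  muhat1 = mu1 -> muhat0 = mu0 ->
  0 <= l1 -> 0 <= u1 -> 0 <= l0 -> 0 <= u0 ->
  P [set y | y.1 <= muhat1 + u1] = (95 / 100)%:E ->
  P [set y | muhat1 - l1 <= y.1] = (95 / 100)%:E ->
  P [set y | y.2 <= muhat0 + u0] = (95 / 100)%:E ->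
  P [set y | muhat0 - l0 <= y.2] = (95 / 100)%:E ->
  let tau := muhat1 - muhat0 in
  let C := `[tau - Drho rho l1 u0, tau + Drho rho l0 u1] in
  P [set y | y.1 - y.2 \in C] = (9 / 10)%:E /\
  forall S : set R, measurable S ->
    P [set y | y.1 - y.2 \in S] = (9 / 10)%:E ->
    (lebesgue_measure [set` C] <= lebesgue_measure S)%E.
Proof.
move=> bvnP -> -> _ u1_ge0 _ _ Pu1 Pl1 Pu0 Pl0.
have [s1_gt0 s0_gt0 rho1 _] := bvnP.
have [z Phiz [el1 eu1 el0 eu0]] := is_bvn_equal_quantiles bvnP Pu1 Pl1 Pu0 Pl0.
subst l1 u1 l0 u0 => tau C.
have z_ge0 : 0 <= z by rewrite -(pmulr_lge0 _ s1_gt0).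
set sd := Drho rho s1 s0.
have sd_gt0 : 0 < sd by exact: Drho_gt0.
have CE : C = `[tau - z * sd, tau + z * sd].
  by rewrite /C !DrhoZ // (DrhoC _ s0) mulrC.
have Pdiff (S : set R) : measurable S -> P [set y | y.1 - y.2 \in S] = normal_prob tau sd S.
  exact: is_bvn_sub.
have PC : normal_prob tau sd [set` C] = (9 / 10)%:E.
  rewrite CE normal_prob_centered_itv // (std_normal_prob_symmetric_itv z_ge0 Phiz).
  by congr EFin; lra.
split=> [|S mS PS].
- rewrite -PC -Pdiff //; congr (P _).
  by apply/seteqP; split => y /=; rewrite in_setE.
- rewrite CE; apply: (normal_prob_itv_min_measure sd_gt0 mS).
  by rewrite -CE PC -PS Pdiff.
Qed.
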